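(* Let $G$ be a finite non-abelian group whose order is divisible by exactly three distinct primes. Then $G$ is exponent-critical if and only if $G$ is the direct product of a cyclic Sylow subgroup of $G$ and its complement, where this complement is a minimal non-abelian group (i.e. a non-abelian group all of whose proper subgroups are abelian).
   Context: A finite group $G$ is called exponent-critical if the exponent $\exp(G)$ of $G$ is not equal to the least common multiple of the exponents of the proper non-abelian subgroups of $G$. *)

From mathcomp Require Import all_boot all_fingroup all_solvable.
Set Implicit Arguments. Unset Strict Implicit. Unset Printing Implicit Defensive.
Local Open Scope group_scope.

Definition lcm_exp_proper_nonabelian (gT : finGroupType) (G : {group gT}) : nat :=
  \big[lcmn/1%N]_(H : {group gT} | (H \proper G) && ~~ abelian H) exponent H.

Definition exponent_critical (gT : finGroupType) (G : {group gT}) : Prop :=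
  exponent G <> lcm_exp_proper_nonabelian G.

Definition minimal_nonabelian (gT : finGroupType) (K : {group gT}) : Prop :=
  ~~ abelian K /\ forall H : {group gT}, H \proper K -> abelian H.

(* If exp G differs from the lcm of the exponents of the proper nonabelian
   subgroups, some p-part of exp G is missed, so an element x of maximal order
   in a Sylow p-subgroup P lies in no proper nonabelian subgroup.  When |G| has
   at least three prime divisors, any {p, s}-subgroup is proper; hence P is
   abelian, and every Sylow s-subgroup normalising or normalised by P
   centralises it.  Such Sylow subgroups exist for every s: trivially if P <| G,
   and otherwise inside the normal p-complement that Burnside's transfer
   argument yields from the abelian group 'N_G(P).  So P is central, G = P \x K
   by Schur-Zassenhaus, x generates P, and L \proper K gives the proper
   subgroup P <*> L containing x.  Conversely, if G = P \x K with P cyclic, a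
   subgroup whose exponent is divisible by |P| contains P, so it is
   P * (K :&: H), which is abelian when it is proper. *)

From mathcomp Require Import all_boot all_fingroup all_solvable ssralg.
Set Implicit Arguments. Unset Strict Implicit. Unset Printing Implicit Defensive.
Local Open Scope group_scope.

Section BurnsideNormalComplement.

Variables (gT : finGroupType) (G P : {group gT}) (p : nat).
Hypotheses (sylP : p.-Sylow(G) P) (abP : abelian P) (cPNP : 'N_G(P) \subset 'C(P)).

Let sPG : P \subset G. Proof. exact: pHall_sub sylP. Qed.

Lemma Sylow_conj_fixed a y : a \in P -> y \in G -> a ^ y \in P -> a ^ y = a.
Proof.
move=> Pa Gy Pay; pose C := 'C_G[a ^ y].
have sCG : C \subset G by apply: subsetIl.
have sPC : P \subset C by rewrite subsetI sPG sub_cent1 (subsetP abP).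
have sPyC : P :^ y \subset C.
  rewrite subsetI -{1}(conjGid Gy) conjSg sPG /=.
  by rewrite cent1J conjSg sub_cent1 (subsetP abP).
have sylPC : p.-Sylow(C) P := pHall_subl sPC sCG sylP.
have sylPyC : p.-Sylow(C) (P :^ y)%G.
  by apply: pHall_subl sPyC sCG _; rewrite pHallJ.
(* Conjugating back inside 'C_G[a ^ y] turns y into an element of 'N_G(P). *)
have [c Cc defPy] := Sylow_trans sylPC sylPyC.
have [Gc cayc] := setIP Cc.
have NGyc : y * c^-1 \in 'N_G(P).
  rewrite inE groupM ?groupV //=.
  by apply/normP; rewrite conjsgM /= defPy -conjsgM mulgV conjsg1.
have /centP cPyc := subsetP cPNP _ NGyc.
have ayc : a ^ (y * c^-1) = a by rewrite /conjg -(cPyc a Pa) mulKg.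
have cayc' : c^-1 \in 'C[a ^ y] by rewrite groupV.
by rewrite -{2}ayc conjgM /conjg -(cent1P cayc') mulKg.
Qed.

Let idmPP : idm P @* P = P. Proof. exact: morphim_idm. Qed.
Let abIP : abelian (idm P @* P). Proof. by rewrite idmPP. Qed.
Let tau := transfer_morphism G abIP.

Lemma transfer_Sylow g : g \in P ->
  tau g = FiniteModule.fmod abIP (g ^+ #|G : P|).
Proof.
move=> Pg; have Gg := subsetP sPG g Pg.
have trX := transversalP (rcosets_cycle_partition sPG Gg).
rewrite /= (transfer_cycle_expansion sPG abIP Gg trX).
rewrite -(sum_index_rcosets_cycle sPG Gg trX).
rewrite FiniteModule.fmodX; last by rewrite /= idmPP.
rewrite (big_morph _ (GRing.mulrnDr _) (GRing.mulr0n _)).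
(* Each term conjugates a power of g back into P, so it is that power itself. *)
apply: eq_bigr => x Xx /=.
have Gx : x \in G by apply: (subsetP (transversal_sub trX)).
set n := #|_ : _|.
have Pgn : g ^+ n \in P by rewrite groupX.
rewrite (Sylow_conj_fixed Pgn) ?groupV //.
  by rewrite /restrm /= FiniteModule.fmodX // /= idmPP.
have := mulg_exp_card_rcosets P g x; rewrite -/n mem_rcoset.
by rewrite /conjg invgK mulgA.
Qed.

Lemma ker_transfer_Sylow : 'ker_P tau = 1.
Proof.
have coiP : coprime #|G : P| #|P|.
  by case/and3P: sylP => _ pP p'i; rewrite (p'nat_coprime (pi := p)).
apply/trivgP/subsetP => g /setIP[Pg Kg]; apply/set1P.
have := mker Kg; rewrite transfer_Sylow // => /(congr1 val).
rewrite FiniteModule.fmodK; last by rewrite /= idmPP groupX.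
move/eqP; rewrite -order_dvdn => ogi.
apply/eqP; rewrite -order_eq1 -dvdn1 -(eqnP coiP) dvdn_gcd ogi.
exact: order_dvdG.
Qed.

Lemma card_transfer_image : #|tau @* G| = #|P|.
Proof.
apply/eqP; rewrite eqn_leq; apply/andP; split.
  apply: leq_trans (max_card _) _.
  rewrite -(card_imset _ val_inj); apply: (@leq_trans #|idm P @* P|).
    by apply/subset_leq_card/subsetP => _ /imsetP[u _ ->]; apply: FiniteModule.fmodP.
  by rewrite idmPP.
have cardP : #|tau @* P| = #|P|.
  by rewrite card_morphim (setIidPr sPG) -indexgI ker_transfer_Sylow indexg1.
by rewrite -{1}cardP subset_leq_card ?morphimS.
Qed.

Theorem Burnside_normal_complement :
  exists K : {group gT}, K <| G /\ p^'.-Hall(G) K.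
Proof.
exists ('ker tau)%G; split; first exact: ker_normal.
have sKG : 'ker tau \subset G by apply: subsetIl.
have iK : #|G : 'ker tau| = #|P| by rewrite -card_transfer_image card_morphim setIid.
rewrite pHallE sKG /= -(eqn_pmul2r (indexg_gt0 G ('ker tau))) (Lagrange sKG).
by rewrite iK (card_Hall sylP) mulnC partnC.
Qed.

End BurnsideNormalComplement.

Lemma pfactor_dvdn_biglcm (I : finType) (P : pred I) (F : I -> nat) p k :
  prime p -> 0 < k -> (forall i, P i -> 0 < F i) ->
  p ^ k %| \big[lcmn/1%N]_(i | P i) F i -> exists2 i, P i & p ^ k %| F i.
Proof.
move=> p_pr k_gt0 F_gt0.
pose Inv m := 0 < m /\ (p ^ k %| m -> exists2 i, P i & p ^ k %| F i).
suff [] : Inv (\big[lcmn/1%N]_(i | P i) F i) by [].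
apply: big_rec => [|i m Pi [m_gt0 IHm]]; rewrite /Inv.
  split => //; rewrite dvdn1 -(expn0 p) eqn_exp2l ?prime_gt1 //.
  by rewrite eqn0Ngt k_gt0.
split; first by rewrite lcmn_gt0 F_gt0.
rewrite !pfactor_dvdn ?lcmn_gt0 ?F_gt0 ?m_gt0 // logn_lcm ?F_gt0 // leq_max.
case/orP => [dvF | dvm]; first by exists i => //; rewrite pfactor_dvdn ?F_gt0.
by apply: IHm; rewrite pfactor_dvdn.
Qed.

Lemma third_prime n p q :
  2 < size (primes n) -> exists2 r, r \in primes n & r \notin [:: p; q].
Proof.
move=> size_gt2.
have [/allP sub | /allPn[r pr nr]] := boolP (all (mem [:: p; q]) (primes n)).
  by have := uniq_leq_size (primes_uniq n) sub; rewrite leqNgt size_gt2.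
by exists r.
Qed.

Section Subgroups.

Variable gT : finGroupType.
Implicit Types G H P K A B S : {group gT}.

Definition critical_element G (x : gT) :=
  forall H, H \proper G -> x \in H -> abelian H.

Lemma exponent_critical_element G : exponent_critical G ->
  exists p P x, [/\ p \in primes #|G|, p.-Sylow(G) P, x \in P
                  & critical_element G x].
Proof.
rewrite /exponent_critical; set L := lcm_exp_proper_nonabelian G => crit.
have dvdLE : L %| exponent G.
  by apply/dvdn_biglcmP => H /andP[prH _]; apply: exponentS (proper_sub prH).
have [p pE ndvd] : exists2 p, p \in primes (exponent G) & ~~ ((exponent G)`_p %| L).
  apply/hasP; apply/negPn/negP => /hasPn dvdL; apply: crit; apply/eqP.
  rewrite eqn_dvd dvdLE andbT; apply/(dvdn_partP _ (exponent_gt0 G)) => q qE.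
  by have := dvdL q qE; rewrite negbK.
have pG : p \in primes #|G| by rewrite -primes_exponent.
have [P sylP] := Sylow_exists p G.
have [x Px expPx] := exponent_witness (pgroup_nil (pHall_pgroup sylP)).
exists p, P, x; split => // H prH Hx; apply: contraR ndvd => nabH.
rewrite -(exponent_Hall sylP) expPx (dvdn_trans (dvdn_exponent Hx)) //.
by apply: biglcmn_sup (dvdnn _); rewrite prH.
Qed.

Lemma full_Sylows_eq G H : H \subset G ->
  (forall s, s \in primes #|G| ->
     exists2 S : {group gT}, s.-Sylow(G) S & S \subset H) ->
  H :=: G.
Proof.
move=> sHG sylH; apply/eqP; rewrite eqEcard sHG dvdn_leq //.
apply/(dvdn_partP _ (cardG_gt0 G)) => s /sylH[S sylS sSH].
by rewrite -(card_Hall sylS) cardSg.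
Qed.

Lemma pgroup_proper G H (pi : nat_pred) r : H \subset G -> pi.-group H ->
  r \in primes #|G| -> r \notin pi -> H \proper G.
Proof.
move=> sHG piH; rewrite mem_primes => /and3P[r_pr _ rG] r'pi.
case: (eqVproper sHG) => // eqHG.
by have := pgroupP piH r r_pr; rewrite eqHG => /(_ rG); rewrite (negbTE r'pi).
Qed.

Lemma dprod_join_proper G P K A B : P \x K = G -> A \subset P -> B \subset K ->
  (A \proper P) || (B \proper K) -> (A <*> B)%G \proper G.
Proof.
move=> defG sAP sBK prAB; have [_ defPK cKP tiPK] := dprodP defG.
have cBA : B \subset 'C(A) by rewrite (subset_trans sBK) // (subset_trans cKP) ?centS.
have tiAB : A :&: B = 1 by apply/trivgP; rewrite -tiPK setISS.
have sABG : A <*> B \subset G.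
  rewrite join_subG -defPK.
  by rewrite (subset_trans sAP (mulG_subl _ _)) (subset_trans sBK (mulG_subr _ _)).
rewrite properEcard sABG -(dprod_card (dprodEY cBA tiAB)) -(dprod_card defG).
case/orP: prAB => [/proper_card ltAP | /proper_card ltBK].
  apply: leq_ltn_trans (leq_mul (leqnn _) (subset_leq_card sBK)) _.
  by rewrite ltn_pmul2r.
apply: leq_ltn_trans (leq_mul (subset_leq_card sAP) (leqnn _)) _.
by rewrite ltn_pmul2l.
Qed.

Section CriticalDirectFactor.

Variables (G P K : {group gT}) (x : gT).
Hypotheses (defG : P \x K = G) (Px : x \in P) (abP : abelian P).
Hypotheses (nabG : ~~ abelian G) (abx : critical_element G x).

Let nabK : ~~ abelian K.
Proof.
apply: contra nabG => abK; have [_ defPK cKP _] := dprodP defG.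
by rewrite -defPK abelianM abP abK.
Qed.

Lemma critical_cycle_eq : <[x]> = P.
Proof.
have sxP : <[x]> \subset P by rewrite cycle_subG.
have [// | prxP] := eqVproper sxP; case/negP: nabK.
have prxK : (<[x]> <*> K)%G \proper G.
  by apply: dprod_join_proper defG sxP (subxx K) _; rewrite prxP.
exact: abelianS (joing_subr _ _) (abx prxK (subsetP (joing_subl _ _) x (cycle_id x))).
Qed.

Lemma critical_minimal_nonabelian : minimal_nonabelian K.
Proof.
split=> // L prLK.
have prPL : (P <*> L)%G \proper G.
  by apply: dprod_join_proper defG (subxx P) (proper_sub prLK) _; rewrite prLK orbT.
exact: abelianS (joing_subr _ _) (abx prPL (subsetP (joing_subl _ _) x Px)).
Qed.

End CriticalDirectFactor.

Section CriticalSylow.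

Variables (G P : {group gT}) (p : nat) (x : gT).
Hypotheses (primes_gt2 : 2 < size (primes #|G|)) (sylP : p.-Sylow(G) P).
Hypotheses (Px : x \in P) (abx : critical_element G x).

Let sPG : P \subset G. Proof. exact: pHall_sub sylP. Qed.
Let pP : p.-group P. Proof. exact: pHall_pgroup sylP. Qed.

Lemma critical_abelian_Sylow : abelian P.
Proof.
have [r rG] := third_prime p p primes_gt2; rewrite !inE orbb => r'p.
by apply: abx Px; apply: pgroup_proper sPG pP rG _; rewrite inE.
Qed.

Lemma compatible_sub_cent (s : nat) S : s.-group S -> S \subset G ->
  (S \subset 'N(P)) || (P \subset 'N(S)) -> S \subset 'C(P).
Proof.
move=> sS sSG nPS; have [r rG r'ps] := third_prime p s primes_gt2.
pose pi : nat_pred := [pred t in [:: p; s]].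
have defPS : P <*> S = P * S.
  by case/orP: nPS => nPS; [rewrite norm_joinEr | rewrite norm_joinEl].
have piPS : pi.-group (P <*> S).
  rewrite defPS pgroupM (sub_pgroup _ pP) ?(sub_pgroup _ sS) // => t;
    by rewrite !inE => ->; rewrite ?orbT.
have prPS : (P <*> S)%G \proper G.
  by apply: pgroup_proper piPS rG r'ps; rewrite join_subG sPG.
have abPS := abx prPS (subsetP (joing_subl _ _) x Px).
exact: subset_trans (joing_subr P S) (subset_trans abPS (centS (joing_subl P S))).
Qed.

Lemma compatible_Sylow_exists s : s \in primes #|G| ->
  exists2 S : {group gT}, s.-Sylow(G) S & (S \subset 'N(P)) || (P \subset 'N(S)).
Proof.
move=> sG; have [S sylS] := Sylow_exists s G.
have [eqNG | prNG] := eqVproper (subsetIl G 'N(P)).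
  by exists S => //; rewrite (subset_trans (pHall_sub sylS)) // -eqNG subsetIr.
have sPN : P \subset 'N_G(P) by rewrite subsetI sPG normG.
have cPN : 'N_G(P) \subset 'C(P).
  exact: subset_trans (abx prNG (subsetP sPN x Px)) (centS sPN).
have [K [nKG hallK]] := Burnside_normal_complement sylP critical_abelian_Sylow cPN.
have [-> | s'p] := eqVneq s p; first by exists P; rewrite ?normG ?orbT.
have nKP : P \subset 'N(K) := subset_trans sPG (normal_norm nKG).
have coKP : coprime #|K| #|P| := p'nat_coprime (pHall_pgroup hallK) pP.
have [T sylTK nTP] := sol_coprime_Sylow_exists s (pgroup_sol pP) nKP coKP.
by exists T; [apply: subHall_Sylow hallK _ sylTK; rewrite !inE | rewrite nTP orbT].
Qed.

Lemma critical_Sylow_central : G \subset 'C(P).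
Proof.
suff <- : 'C_G(P) = G by apply: subsetIr.
apply: full_Sylows_eq (subsetIl _ _) _ => s /compatible_Sylow_exists[S sylS nPS].
have [sSG sS] := (pHall_sub sylS, pHall_pgroup sylS).
by exists S; rewrite // subsetI sSG (compatible_sub_cent sS).
Qed.

Lemma critical_Sylow_dprod : exists K : {group gT}, P \x K = G.
Proof.
have nPG : P <| G by rewrite /normal sPG cents_norm // critical_Sylow_central.
have /splitsP[K /complP[tiPK defPK]] := SchurZassenhaus_split (pHall_Hall sylP) nPG.
have sKG : K \subset G by rewrite -defPK mulG_subr.
by exists K; rewrite dprodE ?defPK ?(subset_trans sKG critical_Sylow_central).
Qed.

End CriticalSylow.

Lemma normal_Sylow_sub_cycle G P p y : p.-Sylow(G) P -> P <| G -> y \in G ->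
  #|P| %| #[y] -> P \subset <[y]>.
Proof.
move=> sylP nPG Gy dvPy.
have [m def_oy] : exists m, #[y] = (m * #|P|)%N by exists (#[y] %/ #|P|); rewrite divnK.
have m_gt0 : 0 < m by move: (order_gt0 y); rewrite def_oy muln_gt0 => /andP[].
have oym : #[y ^+ m] = #|P| by rewrite orderXdiv def_oy ?dvdn_mulr // mulKn.
have Pym : y ^+ m \in P.
  by rewrite (mem_normal_Hall sylP nPG) ?groupX // /p_elt oym; apply: pHall_pgroup sylP.
suff <- : <[y ^+ m]> = P by apply: cycleX.
by apply/eqP; rewrite eqEcard cycle_subG Pym -oym /=.
Qed.

Lemma exponent_critical_dprod G P K p : p \in primes #|G| -> p.-Sylow(G) P ->
  cyclic P -> P \x K = G -> minimal_nonabelian K -> exponent_critical G.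
Proof.
move=> pG sylP cycP defG [nabK minK] eqL.
have p_pr : prime p by move: pG; rewrite mem_primes => /andP[].
have [_ defPK cKP _] := dprodP defG.
have nPG : P <| G by case/dprod_normal2: defG.
have cardP : #|P| = (p ^ logn p #|P|)%N := card_pgroup (pHall_pgroup sylP).
have k_gt0 : 0 < logn p #|P| by rewrite (card_Hall sylP) logn_part logn_gt0.
have dvPexp : #|P| %| exponent G.
  by rewrite -(exponent_cyclic cycP) exponentS ?(pHall_sub sylP).
rewrite eqL cardP in dvPexp.
have [H /andP[prHG nabH] dvH] :=
  pfactor_dvdn_biglcm p_pr k_gt0 (fun H _ => exponent_gt0 H) dvPexp.
have [y Hy dvy] := pfactor_dvdn_biglcm p_pr k_gt0 (fun y _ => order_gt0 y) dvH.
have sHG := proper_sub prHG.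
have sPH : P \subset H.
  rewrite -cardP in dvy.
  have sPy := normal_Sylow_sub_cycle sylP nPG (subsetP sHG y Hy) dvy.
  by rewrite (subset_trans sPy) ?cycle_subG.
have prKH : (K :&: H)%G \proper K.
  rewrite properE subsetIl /=; apply/negP => /subset_trans/(_ (subsetIr K H)) sKH.
  by move: prHG; rewrite properE -defPK mul_subG ?andbF.
have defH : P * (K :&: H) = H by rewrite group_modl // defPK (setIidPr sHG).
case/negP: nabH; rewrite -defH abelianM (cyclic_abelian cycP) (minK _ prKH).
exact: subset_trans (subsetIl K H) cKP.
Qed.

End Subgroups.

Unset Implicit Arguments.
Set Strict Implicit.

Theorem theoremB (gT : finGroupType) (G : {group gT}) :
  ~~ abelian G -> size (primes #|G|) = 3 ->
  (exponent_critical G <->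
   exists p : nat, exists P K : {group gT},
     [/\ p \in primes #|G|, p.-Sylow(G) P, cyclic P,
         P \x K = G & minimal_nonabelian K]).
Proof.
move=> nabG three; split => [crit | [p [P [K [pG sylP cycP defG minK]]]]]; last first.
  exact: exponent_critical_dprod pG sylP cycP defG minK.
have [p [P [x [pG sylP Px abx]]]] := exponent_critical_element crit.
have primes_gt2 : 2 < size (primes #|G|) by rewrite three.
have abP := critical_abelian_Sylow primes_gt2 sylP Px abx.
have [K defG] := critical_Sylow_dprod primes_gt2 sylP Px abx.
exists p, P, K; split => //.
  by rewrite -(critical_cycle_eq defG Px abP nabG abx) cycle_cyclic.
exact: critical_minimal_nonabelian defG Px abP nabG abx.
Qed.
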